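(* There is a constant $c>0$ depending only on $\alpha$ such that the following holds. Suppose $0<A<B$ and $\Lambda,\Gamma\ge0$ with $A\pm\Lambda$ and $B\pm\Gamma$ integers, $\Lambda<A$, $B-\Gamma\ge A$, and $\Gamma/B\le\frac18\Lambda/A$. Then \[ \Pr\Bigl[\bigcup_{\ell\le\Gamma}BINGO(A+\Lambda,A-\Lambda;B+\ell,B-\ell)\Bigr]\le e^{-c\Lambda^2/A}, \] where the union is over all $\ell\le\Gamma$ (including negative $\ell$) with $B\pm\ell$ integers.
   Context: Fix $\alpha>1$. Consider the Markov chain on $\mathbb N\times\mathbb N$ which from state $(i,j)$ moves to $(i+1,j)$ with probability $i^\alpha/(i^\alpha+j^\alpha)$ and to $(i,j+1)$ with probability $j^\alpha/(i^\alpha+j^\alpha)$. For states $(a,b)$, $(c,d)$, $BINGO(a,b;c,d)$ denotes the event that this chain, started at state $(a,b)$, visits the state $(c,d)$ (empty if $(c,d)$ is not coordinatewise $\ge(a,b)$). *)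

From Stdlib Require Import Reals Lra ClassicalEpsilon.
Open Scope R_scope.

(* weight w(i) = i^alpha for i >= 1; states have positive coordinates
   (N = {1,2,...}); we set w(0) = 0, which is never used from a start
   state with positive coordinates. *)
Definition wt (alpha : R) (i : nat) : R :=
  match i with O => 0 | S _ => Rpower (INR i) alpha end.

Definition pRight (alpha : R) (i j : nat) : R :=
  wt alpha i / (wt alpha i + wt alpha j).
Definition pUp (alpha : R) (i j : nat) : R :=
  wt alpha j / (wt alpha i + wt alpha j).

Fixpoint hitWithin (alpha : R) (S : nat -> nat -> Prop) (n : nat) (i j : nat)
  : R :=
  if excluded_middle_informative (S i j) then 1 else
  match n with
  | O => 0
  | Datatypes.S m => pRight alpha i j * hitWithin alpha S m (Datatypes.S i) j
          + pUp alpha i j * hitWithin alpha S m i (Datatypes.S j)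
  end.

From Stdlib Require Import Reals ZArith Lra Lia Psatz ClassicalEpsilon.
Open Scope R_scope.

(* Track the share x = i/(i+j) of the first coordinate.  The start has share
   1/2 + Lam/(2A), while every target has share at most
   xs = (B+Gam)/(2B) <= 1/2 + Lam/(16A).  For alpha >= 1 the leading coordinate
   grows with probability at least its share, so the share is a submartingale
   with increments of order 1/s; a Hoeffding-type computation makes
   min(1, exp(-th (x - xs) + 2 th^2 / s)) superharmonic for th <= s/4.  This
   capped potential is 1 on the targets, so it bounds the hitting probability,
   and at the start with th = Lam/8 it is at most exp(-Lam^2/(32 A)). *)

Lemma exp_le_exp x y : x <= y -> exp x <= exp y.
Proof. intros [Hlt | ->]; [left; exact (exp_increasing _ _ Hlt) | lra]. Qed.

Lemma exp_le_quadratic y : y <= 1/2 -> exp y <= 1 + y + 2 * y ^ 2.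
Proof.
  intros Hy.
  pose proof (exp_ineq1_le (- y)). pose proof (exp_pos y).
  assert (Hinv : exp y * exp (- y) = 1) by (rewrite <- exp_plus, Rplus_opp_r; apply exp_0).
  assert (exp y * (1 - y) <= 1) by nra.
  assert (1 <= (1 - y) * (1 + y + 2 * y ^ 2)) by nra.
  nra.
Qed.

Lemma two_point_exp_le r y1 y2 t :
  0 <= r <= 1 -> y1 <= 1/2 -> y2 <= 1/2 ->
  r * y1 + (1 - r) * y2 <= 0 -> 2 * (r * y1 ^ 2 + (1 - r) * y2 ^ 2) <= t ->
  r * exp y1 + (1 - r) * exp y2 <= exp t.
Proof.
  intros Hr Hy1 Hy2 Hmean Hvar.
  pose proof (exp_ineq1_le t).
  assert (r * exp y1 <= r * (1 + y1 + 2 * y1 ^ 2))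
    by (apply Rmult_le_compat_l; [lra | now apply exp_le_quadratic]).
  assert ((1 - r) * exp y2 <= (1 - r) * (1 + y2 + 2 * y2 ^ 2))
    by (apply Rmult_le_compat_l; [lra | now apply exp_le_quadratic]).
  lra.
Qed.

Definition potential_exponent (th xs x s : R) : R :=
  - th * (x / s - xs) + 2 * th ^ 2 / s.

Lemma potential_exponent_step th xs x s r :
  0 < s -> 0 <= x <= s -> x / s <= r <= 1 -> 0 <= th -> 4 * th <= s ->
  r * exp (potential_exponent th xs (x + 1) (s + 1))
  + (1 - r) * exp (potential_exponent th xs x (s + 1))
  <= exp (potential_exponent th xs x s).
Proof.
  intros Hs Hx [Hr Hr1] Hth Hths.
  set (E := potential_exponent th xs x s).
  set (v := / (s * (s + 1))).
  assert (Hv : 0 < v) by (apply Rinv_0_lt_compat; nra).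
  assert (Hvu : v * (s * (s + 1)) = 1) by (apply Rinv_l; nra).
  set (y1 := - th * (s - x) * v). set (y2 := th * x * v). set (t := 2 * th ^ 2 * v).
  assert (Hright : potential_exponent th xs (x + 1) (s + 1) = E + y1 + - t).
  { unfold E, potential_exponent, y1, t, v. field. lra. }
  assert (Hup : potential_exponent th xs x (s + 1) = E + y2 + - t).
  { unfold E, potential_exponent, y2, t, v. field. lra. }
  assert (Hxr : x <= r * s).
  { apply (Rmult_le_compat_r s) in Hr; [|lra].
    unfold Rdiv in Hr. rewrite Rmult_assoc, Rinv_l in Hr; lra. }
  assert (Hr0 : 0 <= r) by (apply (Rle_trans _ (x / s)); [apply Rle_mult_inv_pos|]; lra).
  assert (Hsum : r * exp y1 + (1 - r) * exp y2 <= exp t).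
  { apply two_point_exp_le; unfold y1, y2, t.
    - lra.
    - assert (0 <= th * (s - x)) by nra. nra.
    - assert (th * x <= s * (s + 1) / 4) by nra. nra.
    - replace (r * (- th * (s - x) * v) + (1 - r) * (th * x * v)) with ((th * v) * (x - r * s)) by ring.
      assert (0 <= th * v) by nra. nra.
    - replace (2 * (r * (- th * (s - x) * v) ^ 2 + (1 - r) * (th * x * v) ^ 2))
        with (2 * th ^ 2 * v * (v * (r * (s - x) ^ 2 + (1 - r) * x ^ 2))) by ring.
      assert (v * (r * (s - x) ^ 2 + (1 - r) * x ^ 2) <= 1).
      { rewrite <- Hvu. apply Rmult_le_compat_l; nra. }
      assert (0 <= 2 * th ^ 2 * v) by nra. nra. }
  rewrite Hright, Hup, !exp_plus.
  assert (Het : exp t * exp (- t) = 1) by (rewrite <- exp_plus, Rplus_opp_r; apply exp_0).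
  pose proof (exp_pos E). pose proof (exp_pos (- t)).
  replace (r * (exp E * exp y1 * exp (- t)) + (1 - r) * (exp E * exp y2 * exp (- t)))
    with (exp E * exp (- t) * (r * exp y1 + (1 - r) * exp y2)) by ring.
  apply (Rle_trans _ (exp E * exp (- t) * exp t)); [apply Rmult_le_compat_l; nra | nra].
Qed.

Lemma Rpower_ratio_ge x y a :
  0 < y <= x -> 1 <= a -> x / (x + y) <= Rpower x a / (Rpower x a + Rpower y a).
Proof.
  intros [Hy Hyx] Ha.
  assert (Hsplit : forall z, 0 < z -> Rpower z a = z * Rpower z (a - 1)).
  { intros z Hz. replace a with (1 + (a - 1)) at 1 by ring.
    now rewrite Rpower_plus, Rpower_1. }
  rewrite (Hsplit x), (Hsplit y) by lra.
  assert (Hmono : Rpower y (a - 1) <= Rpower x (a - 1)) by (apply Rle_Rpower_l; lra).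
  assert (0 < Rpower y (a - 1)) by apply exp_pos.
  set (bx := Rpower x (a - 1)) in *. set (by_ := Rpower y (a - 1)) in *.
  assert (Hdiff : x * bx / (x * bx + y * by_) - x / (x + y)
                  = x * y * (bx - by_) / ((x * bx + y * by_) * (x + y))).
  { field. split; nra. }
  assert (0 <= x * y * (bx - by_) / ((x * bx + y * by_) * (x + y))).
  { assert (0 < x * bx + y * by_) by nra.
    apply Rle_mult_inv_pos; [apply Rmult_le_pos | apply Rmult_lt_0_compat]; nra. }
  lra.
Qed.

Lemma wt_pos alpha k : (1 <= k)%nat -> 0 < wt alpha k.
Proof. intros Hk. destruct k; [lia | apply exp_pos]. Qed.

Lemma wt_nonneg alpha k : 0 <= wt alpha k.
Proof. destruct k; [simpl; lra | left; apply wt_pos; lia]. Qed.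

Lemma pRight_ge_ratio alpha i j : 1 <= alpha -> (1 <= j <= i)%nat ->
  INR i / (INR i + INR j) <= pRight alpha i j.
Proof.
  intros Ha [Hj Hji]. unfold pRight.
  destruct i as [|i']; [lia|]. destruct j as [|j']; [lia|].
  unfold wt. apply Rpower_ratio_ge; [|lra].
  split; [apply lt_0_INR | apply le_INR]; lia.
Qed.

Lemma pRight_nonneg alpha i j : 0 <= pRight alpha i j.
Proof.
  unfold pRight. pose proof (wt_nonneg alpha i). pose proof (wt_nonneg alpha j).
  destruct (Req_dec (wt alpha i + wt alpha j) 0) as [Hz | Hz].
  - rewrite Hz, Rdiv_0_r. lra.
  - apply Rle_mult_inv_pos; lra.
Qed.

Lemma pUp_nonneg alpha i j : 0 <= pUp alpha i j.
Proof.
  unfold pUp. pose proof (wt_nonneg alpha i). pose proof (wt_nonneg alpha j).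
  destruct (Req_dec (wt alpha i + wt alpha j) 0) as [Hz | Hz].
  - rewrite Hz, Rdiv_0_r. lra.
  - apply Rle_mult_inv_pos; lra.
Qed.

Lemma pRight_add_pUp alpha i j : (1 <= j)%nat -> pRight alpha i j + pUp alpha i j = 1.
Proof.
  intros Hj. pose proof (wt_nonneg alpha i). pose proof (wt_pos alpha j Hj).
  unfold pRight, pUp. field. lra.
Qed.

Section SuperharmonicBound.

Variables (alpha : R) (T D : nat -> nat -> Prop) (f : nat -> nat -> R).

Hypothesis D_right : forall i j, D i j -> D (S i) j.
Hypothesis D_up : forall i j, D i j -> D i (S j).
Hypothesis f_nonneg : forall i j, D i j -> 0 <= f i j.
Hypothesis f_ge1_target : forall i j, D i j -> T i j -> 1 <= f i j.
Hypothesis f_superharmonic : forall i j, D i j -> ~ T i j ->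
  pRight alpha i j * f (S i) j + pUp alpha i j * f i (S j) <= f i j.

Lemma hitWithin_le_superharmonic n i j : D i j -> hitWithin alpha T n i j <= f i j.
Proof.
  revert i j; induction n as [|m IH]; intros i j Hij; simpl;
    destruct (excluded_middle_informative (T i j)) as [HT | HT]; auto.
  apply (Rle_trans _ (pRight alpha i j * f (S i) j + pUp alpha i j * f i (S j))); auto.
  apply Rplus_le_compat; apply Rmult_le_compat_l;
    auto using pRight_nonneg, pUp_nonneg.
Qed.

End SuperharmonicBound.

Definition potential (th xs : R) (i j : nat) : R :=
  exp (potential_exponent th xs (INR i) (INR i + INR j)).

Lemma potential_S_l th xs i j :
  potential th xs (S i) j = exp (potential_exponent th xs (INR i + 1) (INR i + INR j + 1)).
Proof. unfold potential. rewrite S_INR. do 2 f_equal. ring. Qed.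

Lemma potential_S_r th xs i j :
  potential th xs i (S j) = exp (potential_exponent th xs (INR i) (INR i + INR j + 1)).
Proof. unfold potential. rewrite S_INR. do 2 f_equal. ring. Qed.

Lemma potential_lt1_first_ahead th xs i j :
  0 <= th -> 1/2 <= xs -> 0 < INR i + INR j -> potential th xs i j < 1 -> (j < i)%nat.
Proof.
  intros Hth Hxs Hs Hlt. destruct (Nat.lt_ge_cases j i) as [Hji | Hij]; auto.
  exfalso. apply le_INR in Hij.
  assert (INR i / (INR i + INR j) <= 1/2).
  { apply (Rmult_le_reg_r (INR i + INR j)); [lra|].
    unfold Rdiv. rewrite Rmult_assoc, Rinv_l; lra. }
  assert (0 <= 2 * th ^ 2 / (INR i + INR j)) by (apply Rle_mult_inv_pos; nra).
  assert (1 <= potential th xs i j); [|lra].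
  unfold potential, potential_exponent. rewrite <- exp_0. apply exp_le_exp. nra.
Qed.

Lemma capped_potential_superharmonic alpha th xs i j :
  1 <= alpha -> 0 <= th -> 1/2 <= xs -> (1 <= j)%nat -> 4 * th <= INR i + INR j ->
  pRight alpha i j * Rmin 1 (potential th xs (S i) j)
  + pUp alpha i j * Rmin 1 (potential th xs i (S j))
  <= Rmin 1 (potential th xs i j).
Proof.
  intros Ha Hth Hxs Hj Hs.
  pose proof (pRight_nonneg alpha i j). pose proof (pUp_nonneg alpha i j).
  pose proof (pRight_add_pUp alpha i j Hj).
  assert (Hj1 : 1 <= INR j) by (apply (le_INR 1); exact Hj).
  pose proof (pos_INR i).
  destruct (Rle_lt_dec 1 (potential th xs i j)) as [Hge | Hlt].
  - rewrite (Rmin_left 1 (potential th xs i j)) by exact Hge.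
    pose proof (Rmin_l 1 (potential th xs (S i) j)).
    pose proof (Rmin_l 1 (potential th xs i (S j))).
    nra.
  - rewrite (Rmin_right 1 (potential th xs i j)) by lra.
    pose proof (Rmin_r 1 (potential th xs (S i) j)).
    pose proof (Rmin_r 1 (potential th xs i (S j))).
    assert (Hji := potential_lt1_first_ahead th xs i j Hth Hxs ltac:(lra) Hlt).
    assert (Hdrift := pRight_ge_ratio alpha i j Ha ltac:(lia)).
    assert (Hstep := potential_exponent_step th xs (INR i) (INR i + INR j) (pRight alpha i j)).
    replace (pUp alpha i j) with (1 - pRight alpha i j) by lra.
    apply (Rle_trans _ (pRight alpha i j * potential th xs (S i) j
                        + (1 - pRight alpha i j) * potential th xs i (S j))).
    + apply Rplus_le_compat; apply Rmult_le_compat_l; lra.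
    + rewrite potential_S_l, potential_S_r. apply Hstep; lra.
Qed.

Lemma potential_ge1_target th B Gam l i j :
  0 < B -> 0 <= th -> l <= Gam -> INR i = B + l -> INR j = B - l ->
  1 <= potential th ((B + Gam) / (2 * B)) i j.
Proof.
  intros HB Hth Hl Hi Hj. unfold potential, potential_exponent.
  rewrite Hi, Hj, <- exp_0. apply exp_le_exp.
  replace (B + l + (B - l)) with (2 * B) by ring.
  replace (- th * ((B + l) / (2 * B) - (B + Gam) / (2 * B)) + 2 * th ^ 2 / (2 * B))
    with ((th * (Gam - l) + 2 * th ^ 2) * / (2 * B)) by (field; lra).
  apply Rle_mult_inv_pos; nra.
Qed.

Lemma potential_start_le A B Lam Gam p q :
  0 < A -> 0 < B -> 0 <= Lam -> INR p = A + Lam -> INR q = A - Lam ->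
  Gam / B <= (1/8) * (Lam / A) ->
  potential (Lam / 8) ((B + Gam) / (2 * B)) p q <= exp (- (1/32) * Lam ^ 2 / A).
Proof.
  intros HA HB HLam Hp Hq Hratio. unfold potential, potential_exponent.
  rewrite Hp, Hq. apply exp_le_exp.
  replace (A + Lam + (A - Lam)) with (2 * A) by ring.
  set (u := Lam / A) in *. set (w := Gam / B) in *.
  replace (- (Lam / 8) * ((A + Lam) / (2 * A) - (B + Gam) / (2 * B)) + 2 * (Lam / 8) ^ 2 / (2 * A))
    with (- Lam / 16 * (u - w) + Lam * u / 64) by (unfold u, w; field; lra).
  replace (- (1/32) * Lam ^ 2 / A) with (- Lam * u / 32) by (unfold u; field; lra).
  assert (0 <= u) by (apply Rle_mult_inv_pos; lra).
  nra.
Qed.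

Theorem mainTheorem10 :
  forall alpha : R, 1 < alpha ->
  exists c : R, 0 < c /\
  forall (A B Lam Gam : R) (p q : nat),
    0 < A -> A < B -> 0 <= Lam -> 0 <= Gam ->
    (* A + Lam and A - Lam are integers; they are the start coordinates *)
    INR p = A + Lam -> INR q = A - Lam ->
    (exists z : Z, IZR z = B + Gam) -> (exists z : Z, IZR z = B - Gam) ->
    Lam < A -> A <= B - Gam -> Gam / B <= (1/8) * (Lam / A) ->
    forall n : nat,
      hitWithin alpha
        (fun i j => exists l : R, l <= Gam /\ INR i = B + l /\ INR j = B - l)
        n p q
      <= exp (- c * Lam ^ 2 / A).
Proof.
  intros alpha Halpha. exists (1/32). split; [lra|].
  intros A B Lam Gam p q HA HAB HLam HGam Hp Hq _ _ HLamA _ Hratio n.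
  set (th := Lam / 8). set (xs := (B + Gam) / (2 * B)).
  assert (Hxs : 1/2 <= xs).
  { unfold xs. replace ((B + Gam) / (2 * B)) with (1/2 + Gam * / (2 * B)) by (field; lra).
    assert (0 <= Gam * / (2 * B)) by (apply Rle_mult_inv_pos; lra). lra. }
  assert (Hq1 : (1 <= q)%nat) by (destruct q; [simpl in Hq; lra | lia]).
  apply (Rle_trans _ (Rmin 1 (potential th xs p q))).
  - apply (hitWithin_le_superharmonic alpha _
             (fun i j => (1 <= j)%nat /\ 4 * th <= INR i + INR j)
             (fun i j => Rmin 1 (potential th xs i j))).
    + intros i j [Hj Hs]. rewrite S_INR. split; [exact Hj | lra].
    + intros i j [Hj Hs]. rewrite S_INR. split; [lia | lra].
    + intros i j _. apply Rmin_glb; [lra | left; apply exp_pos].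
    + intros i j _ [l [Hl [Hi Hj]]]. apply Rmin_glb; [lra|].
      apply (potential_ge1_target th B Gam l); unfold th; lra.
    + intros i j [Hj Hs] _. apply capped_potential_superharmonic; auto; unfold th; lra.
    + split; [exact Hq1 | rewrite Hp, Hq; unfold th; lra].
  - eapply Rle_trans; [apply Rmin_r | apply potential_start_le; lra].
Qed.
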